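(* Let $I$ be a finite set and $T$ a tree on $I$. The lattice $[\hat{0},T]$ (an interval of $\operatorname{For}(I)$) is EL-shellable.
   Context: A tree on a finite set $I$ is a (non-planar) rooted binary tree whose leaves are bijectively labeled by $I$: vertices are inner vertices (valence $3$) and leaves and the root (valence $1$), edges oriented towards the root; one-leaf trees are allowed. A forest on $I$ is a set of trees whose leaf sets partition $I$. For forests $F,G$ on $I$, $F \leq G$ if there is a continuous map $F\to G$ which (D1) is increasing with respect to orientation towards the root, (D2) maps inner vertices to inner vertices injectively, (D3) is the identity of $I$ on leaves, (D4) is injective on each tree of $F$. This gives the poset $\operatorname{For}(I)$, graded by the number of inner vertices, with minimum $\hat{0}$ (no inner vertices). An edge-labeling of a poset $P$ is a map $\lambda$ from the set of covering pairs $x\lhd y$ to $\mathbb{N}$; a saturated chain $x_0\lhd\dots\lhd x_k$ has label $(\lambda(x_0,x_1),\dots,\lambda(x_{k-1},x_k))$ and is increasing if this sequence is weakly increasing. An EL-labeling is an edge-labeling such that every interval $[x,y]$ has exactly one increasing saturated chain from $x$ to $y$, and its label is strictly lexicographically smaller than the label of every other saturated chain from $x$ to $y$. A graded poset is EL-shellable if it admits an EL-labeling. *)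

From mathcomp Require Import all_boot.
Set Implicit Arguments. Unset Strict Implicit. Unset Printing Implicit Defensive.

(* A (non-planar) rooted binary forest whose leaves are bijectively labelled  *)
(* by I is encoded by the set of leaf sets ("clusters") of its non-root       *)
(* vertices: leaves <-> singletons {i}, inner vertices <-> clusters with at   *)
(* least two elements, ancestor order <-> inclusion, trees <-> maximal        *)
(* clusters.  This is the standard bijective encoding (hierarchies).          *)

Section Forests.
Variable I : finType.

Definition inner (A : {set I}) : bool := 1 < #|A|.

Definition is_forest (F : {set {set I}}) : bool :=
  [&& set0 \notin F,
      [forall i, [set i] \in F],
      [forall A in F, forall B in F,
          [|| A \subset B, B \subset A | [disjoint A & B]]] &
      [forall A in F, inner A ==>
          [exists B1 in F, exists B2 in F,
              [disjoint B1 & B2] && (B1 :|: B2 == A)]]].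

(* a tree on I: a forest consisting of a single tree, whose leaf set is I *)
Definition is_tree (F : {set {set I}}) : bool := is_forest F && (setT \in F).

Definition child (F : {set {set I}}) (C D : {set I}) : bool :=
  [&& C \in F, D \in F, C \proper D &
      [forall E in F, ~~ ((C \proper E) && (E \proper D))]].

(* The order of For(I): F <= G iff there is a map F -> G satisfying (D1)-(D4).
   Since (D2),(D3) force vertices (other than roots) to go to vertices, and
   continuous increasing maps send edges to upward paths, such a map is
   determined (up to reparametrisation) by its values phi on the non-root
   vertices of F (clusters), with:
   - (D3) phi {i} = {i};
   - (D2) inner vertices go to inner vertices of G, injectively;
   - (D1) increasing: the child C of D goes strictly below phi D
          (strict, since the map is injective on each tree, (D4));
   - (D4) injectivity on each tree: the images of the two children of an
          inner vertex D lie in two different child subtrees of phi D.       *)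
Definition forest_le (F G : {set {set I}}) : Prop :=
  exists phi : {set I} -> {set I},
  [/\ forall i : I, phi [set i] = [set i],
      forall A, A \in F -> inner A -> phi A \in G /\ inner (phi A),
      {in [pred A | (A \in F) && inner A] &, injective phi},
      forall C D, child F C D -> phi C \proper phi D &
      forall D C1 C2, child F C1 D -> child F C2 D -> C1 != C2 ->
        exists E1 E2, [/\ child G E1 (phi D), child G E2 (phi D), E1 != E2,
                          phi C1 \subset E1 & phi C2 \subset E2]].

Definition forest0 : {set {set I}} := [set [set i] | i : I].

Definition interval0 (T : {set {set I}}) (F : {set {set I}}) : Prop :=
  is_forest F /\ forest_le forest0 F /\ forest_le F T.

End Forests.

Section EL.
Variables (T : Type) (P : T -> Prop) (le : T -> T -> Prop).

Definition plt (x y : T) : Prop := le x y /\ x <> y.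

Definition covers (x y : T) : Prop :=
  [/\ P x, P y, plt x y & ~ (exists z, [/\ P z, plt x z & plt z y])].

(* x = x_0 <| x_1 <| ... <| x_k = y, where s = [:: x_1; ...; x_k] *)
Fixpoint sat_chain (x : T) (s : seq T) (y : T) : Prop :=
  match s with
  | [::] => x = y
  | z :: s' => covers x z /\ sat_chain z s' y
  end.

Definition chain_label (lam : T -> T -> nat) (x : T) (s : seq T) : seq nat :=
  pairmap lam x s.

Fixpoint lexlt (a b : seq nat) : bool :=
  match a, b with
  | [::], [::] => false
  | [::], _ :: _ => true
  | _ :: _, [::] => false
  | u :: a', v :: b' => (u < v) || ((u == v) && lexlt a' b')
  end.

Definition EL_labeling (lam : T -> T -> nat) : Prop :=
  forall x y, P x -> P y -> le x y ->
    exists s, [/\ sat_chain x s y,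
                  sorted leq (chain_label lam x s),
                  (forall s', sat_chain x s' y ->
                     sorted leq (chain_label lam x s') -> s' = s) &
                  (forall s', sat_chain x s' y -> s' <> s ->
                     lexlt (chain_label lam x s) (chain_label lam x s'))].

Definition EL_shellable : Prop := exists lam, EL_labeling lam.

End EL.

(* Let [hull A] be the smallest cluster of the tree T containing A.  A forest F
   lies in [0^, T] exactly when [hull] is injective on its clusters, and then
   F <= G exactly when every cluster of F grows into a cluster of G with the
   same hull.  So a cover F <| G adds exactly one cluster of T to [hulls F], and
   it is labelled by the key of that cluster, keys being a linear extension of
   strict inclusion.  Given F < G, let v be the new hull of G of least key.
   Every cluster of G strictly below v is then already in F, so there is a cover
   F <| F' <= G adding v (insert the cluster V of G with hull v, and let every
   cluster of F crossing V absorb it), and it is unique.  Hence every increasing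
   chain from F to G starts with this cover while every other chain starts with
   a larger label, and induction on #|hulls G :\: hulls F| gives the EL property. *)

From mathcomp Require Import all_boot.
Set Implicit Arguments. Unset Strict Implicit. Unset Printing Implicit Defensive.

(** * Forests as laminar families *)

Section Forest.
Variable I : finType.
Implicit Types (F G : {set {set I}}) (A B C D E : {set I}).

Definition splits F A B1 B2 :=
  [/\ B1 \in F, B2 \in F, [disjoint B1 & B2] & B1 :|: B2 = A].

Lemma splitsC F A B1 B2 : splits F A B1 B2 -> splits F A B2 B1.
Proof. by case=> ? ? ? <-; split; rewrite 1?disjoint_sym 1?setUC. Qed.

Lemma not_inner_set1 A : A != set0 -> ~~ inner A -> exists x, A = [set x].
Proof.
by move=> nA; rewrite /inner -leqNgt => le1; apply/cards1P; rewrite eqn_leq le1 card_gt0.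
Qed.

Lemma proper_inner A B : A != set0 -> A \proper B -> inner B.
Proof. by rewrite -card_gt0 => A0 /proper_card; apply: leq_trans. Qed.

Lemma proper_ind (P : {set I} -> Prop) :
  (forall D, (forall C, C \proper D -> P C) -> P D) -> forall D, P D.
Proof.
move=> IH D; elim: {D}#|D|.+1 {-2}D (ltnSn #|D|) => [|n IHn] D // ltDn.
by apply: IH => C /proper_card ltCD; apply: IHn; apply: leq_trans ltCD _; rewrite -ltnS.
Qed.

Lemma laminarC A B : [|| A \subset B, B \subset A | [disjoint A & B]] ->
  [|| B \subset A, A \subset B | [disjoint B & A]].
Proof. by rewrite disjoint_sym; case/or3P=> ->; rewrite ?orbT. Qed.

Lemma is_forestI F : set0 \notin F -> (forall i, [set i] \in F) ->
  (forall A B, A \in F -> B \in F -> [|| A \subset B, B \subset A | [disjoint A & B]]) ->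
  (forall A, A \in F -> inner A -> exists B1 B2, splits F A B1 B2) -> is_forest F.
Proof.
move=> F0 F1 Flam Fsplit; apply/and4P; split=> //.
- exact/forallP.
- by apply/forall_inP=> A AF; apply/forall_inP=> B BF; apply: Flam.
apply/forall_inP=> A AF; apply/implyP=> iA.
have [B1 [B2 [B1F B2F dis eA]]] := Fsplit A AF iA.
by apply/exists_inP; exists B1 => //; apply/exists_inP; exists B2; rewrite // dis eA eqxx.
Qed.

Lemma forest0_le F : forest_le (forest0 I) F.
Proof.
have no_child C D : child (forest0 I) C D -> False.
  by case/and4P=> /imsetP [i _ ->] /imsetP [j _ ->] /proper_card; rewrite !cards1.
exists id; split=> //.
- by move=> A /imsetP [i _ ->]; rewrite /inner cards1.
- by move=> C D /no_child.
- by move=> D C1 C2 /no_child.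
Qed.

Definition set_key (A : {set I}) : nat := #|A| * #|{set I}| + enum_rank A.

Lemma set_key_proper A B : A \proper B -> set_key A < set_key B.
Proof.
move=> pAB; rewrite /set_key; apply: (@leq_trans (#|A|.+1 * #|{set I}|)).
  by rewrite mulSn [X in _ < X]addnC ltn_add2l.
by apply: leq_trans (leq_addr _ _); rewrite leq_mul2r proper_card ?orbT.
Qed.

Lemma set_key_inj : injective set_key.
Proof.
move=> A B; rewrite /set_key => eAB.
have N0 : 0 < #|{set I}| by apply: leq_ltn_trans (ltn_ord (enum_rank A)).
have := congr1 (modn^~ #|{set I}|) eAB; rewrite /= !modnMDl !modn_small //.
by move/val_inj/enum_rank_inj.
Qed.

Variable F : {set {set I}}.
Hypothesis hF : is_forest F.

Lemma forest_neq0 A : A \in F -> A != set0.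
Proof. by case/and4P: hF => h0 _ _ _ AF; apply: contraNneq h0 => <-. Qed.

Lemma forest_set1 i : [set i] \in F.
Proof. by case/and4P: hF => _ /forallP. Qed.

Lemma forest_laminar A B : A \in F -> B \in F ->
  [|| A \subset B, B \subset A | [disjoint A & B]].
Proof. by case/and4P: hF => _ _ /forall_inP h _ AF; move/forall_inP: (h A AF); apply. Qed.

Lemma forest_comparable A B x : A \in F -> B \in F -> x \in A -> x \in B ->
  (A \subset B) || (B \subset A).
Proof.
move=> AF BF xA xB; case/or3P: (forest_laminar AF BF) => [->|->|] //; rewrite ?orbT //.
by move/disjointFr => /(_ x xA); rewrite xB.
Qed.

Lemma forest_split A : A \in F -> inner A -> exists B1 B2, splits F A B1 B2.
Proof.
case/and4P: hF => _ _ _ /forall_inP h AF iA; move/implyP: (h A AF) => /(_ iA).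
by case/exists_inP=> B1 B1F /exists_inP [B2 B2F /andP [dis /eqP e]]; exists B1, B2.
Qed.

Lemma splits_neq A B1 B2 : splits F A B1 B2 -> B1 != B2.
Proof.
case=> B1F _ dis _; apply: contraTneq dis => <-.
by rewrite -setI_eq0 setIid forest_neq0.
Qed.

Lemma splits_proper A B1 B2 : splits F A B1 B2 -> B1 \proper A.
Proof.
case=> B1F B2F + <-; rewrite properEneq subsetUl andbT disjoint_sym => dis.
apply: contraTneq (subsetC_disjoint dis (forest_neq0 B2F) (subxx B2)) => ->.
by rewrite negbK subsetUr.
Qed.

Lemma splits_sub_part A B1 B2 C x : splits F A B1 B2 -> C \in F -> C \proper A ->
  x \in C -> x \in B1 -> C \subset B1.
Proof.
case=> B1F B2F dis eA CF pCA xC xB1.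
have B1B2 y : y \in B1 -> y \in B2 -> False by move=> yB1; rewrite (disjointFr dis yB1).
apply/subsetP=> y yC; move: (subsetP (proper_sub pCA) y yC).
rewrite -eA inE => /orP [//|yB2]; exfalso.
case/orP: (forest_comparable CF B2F yC yB2) => [/subsetP/(_ x xC) | sB2C].
  exact: B1B2.
case/orP: (forest_comparable CF B1F xC xB1) => [/subsetP/(_ y yC) yB1 | sB1C].
  exact: B1B2 yB1 yB2.
by move: pCA; rewrite properE -eA subUset sB1C sB2C andbF.
Qed.

Lemma splits_sub A B1 B2 C : splits F A B1 B2 -> C \in F -> C \proper A ->
  (C \subset B1) || (C \subset B2).
Proof.
move=> sA CF pCA; have /set0Pn [x xC] := forest_neq0 CF.
have [_ _ _ eA] := sA; move: (subsetP (proper_sub pCA) x xC); rewrite -eA.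
case/setUP=> xB.
  by rewrite (splits_sub_part sA CF pCA xC xB).
by rewrite (splits_sub_part (splitsC sA) CF pCA xC xB) orbT.
Qed.

Lemma splits_child A B1 B2 : splits F A B1 B2 -> A \in F -> child F B1 A.
Proof.
move=> sA AF; have [B1F B2F dis _] := sA.
apply/and4P; split=> //; first exact: splits_proper sA.
apply/forall_inP=> E EF; apply/negP=> /andP [pB1E pEA].
case/orP: (splits_sub sA EF pEA) => sE.
  by move: pB1E; rewrite properE sE andbF.
have := subsetC_disjoint dis (forest_neq0 B1F) (subxx B1).
by rewrite (subset_trans (proper_sub pB1E) sE).
Qed.

Lemma child_splits A B1 B2 C : splits F A B1 B2 -> child F C A -> C = B1 \/ C = B2.
Proof.
move=> sA /and4P [CF _ pCA /forall_inP noE]; have [B1F B2F _ _] := sA.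
have maxC B : B \in F -> B \proper A -> C \subset B -> C = B.
  move=> BF pBA sCB; apply/eqP; rewrite eqEproper sCB /=.
  by apply: contraTN (noE B BF) => ->; rewrite pBA.
case/orP: (splits_sub sA CF pCA) => sC; [left | right]; apply: maxC => //.
- exact: splits_proper sA.
- exact: splits_proper (splitsC sA).
Qed.

Lemma child_inner C A : child F C A -> inner A.
Proof. by case/and4P=> CF _ pCA _; apply: proper_inner pCA; apply: forest_neq0. Qed.

Lemma splits_inner A B1 B2 : splits F A B1 B2 -> inner A.
Proof.
move=> sA; have [B1F _ _ _] := sA.
exact: proper_inner (forest_neq0 B1F) (splits_proper sA).
Qed.

Lemma children_splits A E1 E2 : child F E1 A -> child F E2 A -> E1 != E2 ->
  splits F A E1 E2.
Proof.
move=> cE1 cE2 nE; have AF : A \in F by case/and4P: cE1.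
have [B1 [B2 sA]] := forest_split AF (child_inner cE1).
move: nE; case: (child_splits sA cE1) => ->; case: (child_splits sA cE2) => ->;
by rewrite ?eqxx // => _; apply: splitsC.
Qed.

End Forest.

(** * Hulls in the tree T *)

Section Tree.
Variables (I : finType) (T : {set {set I}}).
Hypothesis hT : is_tree T.
Implicit Types (F G : {set {set I}}) (A B C D E X Y : {set I}).

Definition hull A := [arg min_(B < setT | (B \in T) && (A \subset B)) #|B|].

(* By [interval0P], the forests of [0^, T]. *)
Definition compatible F := is_forest F /\ {in F &, injective hull}.

(* By [forest_leP], the order of For(I) on compatible forests. *)
Definition extends F G :=
  forall A, A \in F -> exists B, [/\ B \in G, A \subset B & hull A = hull B].

Lemma tree_forest : is_forest T. Proof. by case/andP: hT. Qed.

Lemma hullP A : A != set0 ->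
  [/\ hull A \in T, A \subset hull A & forall B, B \in T -> A \subset B -> hull A \subset B].
Proof.
move=> nA; rewrite /hull; case: arg_minnP; first by case/andP: hT => _ ->; rewrite subsetT.
move=> B /andP [BT sAB] minB; split=> // C CT sAC.
have /set0Pn [x xA] := nA.
case/orP: (forest_comparable tree_forest BT CT (subsetP sAB x xA) (subsetP sAC x xA)) => // sCB.
suff -> : B = C by [].
by apply/eqP; rewrite eq_sym eqEcard sCB minB ?CT.
Qed.

Lemma hull_in A : A != set0 -> hull A \in T. Proof. by case/hullP. Qed.
Lemma sub_hull A : A != set0 -> A \subset hull A. Proof. by case/hullP. Qed.
Lemma hull_min A B : A != set0 -> B \in T -> A \subset B -> hull A \subset B.
Proof. by case/hullP=> _ _; apply. Qed.

Lemma hull_id B : B \in T -> hull B = B.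
Proof.
move=> BT; have nB := forest_neq0 tree_forest BT.
by apply/eqP; rewrite eqEsubset hull_min // sub_hull.
Qed.

Lemma hull_set1 x : hull [set x] = [set x].
Proof. exact/hull_id/forest_set1/tree_forest. Qed.

Lemma hull_eq_set1 A x : A != set0 -> hull A = [set x] -> A = [set x].
Proof. by move=> nA hA; have := sub_hull nA; rewrite hA subset1 (negbTE nA) orbF => /eqP. Qed.

Lemma hull_mono A B : A != set0 -> A \subset B -> hull A \subset hull B.
Proof.
move=> nA sAB; have nB : B != set0 by apply: contraNneq nA => B0; rewrite -subset0 -B0.
exact: hull_min (hull_in nB) (subset_trans sAB (sub_hull nB)).
Qed.

Lemma proper_hull_nsub A B : A != set0 -> hull B \proper hull A -> ~~ (A \subset B).
Proof. by move=> nA; apply: contraTN => sAB; rewrite properE (hull_mono nA sAB) andbF. Qed.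

Lemma hull_inner A : A != set0 -> inner A -> inner (hull A).
Proof. by move=> nA /leq_trans; apply; apply/subset_leq_card/sub_hull. Qed.

Lemma hull_sides u X Y A : u \in T -> splits T u X Y -> A != set0 -> A \subset u ->
  hull A != u -> (hull A \subset X) || (hull A \subset Y).
Proof.
move=> uT su nA sAu nhA; apply: (splits_sub tree_forest su (hull_in nA)).
by rewrite properEneq nhA hull_min.
Qed.

Lemma hull_across u X Y A1 A2 : u \in T -> splits T u X Y -> A1 != set0 -> A2 != set0 ->
  A1 \subset X -> A2 \subset Y -> hull (A1 :|: A2) = u.
Proof.
move=> uT su nA1 nA2 sA1 sA2; have [_ _ dis eu] := su.
have nA : A1 :|: A2 != set0 by apply: contraNneq nA1 => A0; rewrite -subset0 -A0 subsetUl.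
have sAu : A1 :|: A2 \subset u by rewrite -eu setUSS.
apply/eqP; apply: contraT => nhA; have sA := sub_hull nA.
case/orP: (hull_sides uT su nA sAu nhA) => sh.
  by case/negP: (subsetC_disjoint dis nA2 (subset_trans (subsetUr A1 A2) (subset_trans sA sh))).
rewrite disjoint_sym in dis.
by case/negP: (subsetC_disjoint dis nA1 (subset_trans (subsetUl A1 A2) (subset_trans sA sh))).
Qed.

Lemma hull_splits_nsub B X Y : B != set0 -> splits T (hull B) X Y -> ~~ (B \subset X).
Proof.
move=> nB sB; have [XT _ _ _] := sB; apply: proper_hull_nsub nB _.
by rewrite (hull_id XT) (splits_proper tree_forest sB).
Qed.

Lemma compatible_tree : compatible T.
Proof. by split; [exact: tree_forest | move=> A B AT BT; rewrite !hull_id]. Qed.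

Lemma hull_proper F C D : compatible F -> C \in F -> D \in F -> C \proper D ->
  hull C \proper hull D.
Proof.
case=> hF inj CF DF pCD.
rewrite properEneq (hull_mono (forest_neq0 hF CF) (proper_sub pCD)) andbT.
by apply: contraTneq pCD => /inj -> //; rewrite properxx.
Qed.

Lemma hull_side F B C X Y : compatible F -> B \in F -> C \in F -> C \proper B ->
  splits T (hull B) X Y -> (C \subset X) || (C \subset Y).
Proof.
move=> cF BF CF pCB sBT; have nB := forest_neq0 cF.1 BF; have nC := forest_neq0 cF.1 CF.
have sCB := subset_trans (proper_sub pCB) (sub_hull nB).
have nhC := proper_neq (hull_proper cF CF BF pCB).
by case/orP: (hull_sides (hull_in nB) sBT nC sCB nhC) => sh;
  rewrite (subset_trans (sub_hull nC) sh) ?orbT.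
Qed.

Lemma splits_sides F B B1 B2 : compatible F -> B \in F -> splits F B B1 B2 ->
  exists X Y, [/\ splits T (hull B) X Y, B1 \subset X & B2 \subset Y].
Proof.
move=> cF BF sB; have nB := forest_neq0 cF.1 BF; have [B1F B2F _ eB] := sB.
have [X [Y sBT]] := forest_split tree_forest (hull_in nB) (hull_inner nB (splits_inner cF.1 sB)).
have side Bi : Bi \in F -> Bi \subset B1 :|: B2 -> Bi != B -> (Bi \subset X) || (Bi \subset Y).
  by move=> BiF sBi nBi; apply: hull_side cF BF BiF _ sBT; rewrite properEneq nBi -eB.
have notX := hull_splits_nsub nB sBT; have notY := hull_splits_nsub nB (splitsC sBT).
have [s1|s1] := orP (side B1 B1F (subsetUl _ _) (proper_neq (splits_proper cF.1 sB)));
have [s2|s2] := orP (side B2 B2F (subsetUr _ _) (proper_neq (splits_proper cF.1 (splitsC sB)))).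
- by case/negP: notX; rewrite -eB subUset s1 s2.
- by exists X, Y.
- by exists Y, X; split=> //; apply: splitsC.
- by case/negP: notY; rewrite -eB subUset s1 s2.
Qed.

(** * The interval [0^, T] *)

(* [forest_le F G] unfolds to [exists phi, forest_map F G phi]. *)
Definition forest_map F G (phi : {set I} -> {set I}) :=
  [/\ forall i : I, phi [set i] = [set i],
      forall A, A \in F -> inner A -> phi A \in G /\ inner (phi A),
      {in [pred A | (A \in F) && inner A] &, injective phi},
      forall C D, child F C D -> phi C \proper phi D &
      forall D C1 C2, child F C1 D -> child F C2 D -> C1 != C2 ->
        exists E1 E2, [/\ child G E1 (phi D), child G E2 (phi D), E1 != E2,
                          phi C1 \subset E1 & phi C2 \subset E2]].

Lemma forest_map_sub F G phi : is_forest F -> forest_map F G phi ->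
  forall D, D \in F -> D \subset phi D.
Proof.
move=> hF [phi1 _ _ phi_child _]; elim/proper_ind=> D IH DF.
have [iD | /(not_inner_set1 (forest_neq0 hF DF)) [x ->]] := boolP (inner D); last by rewrite phi1.
have [D1 [D2 sD]] := forest_split hF DF iD; have [_ _ _ eD] := sD.
have sub_phi Di Dj : splits F D Di Dj -> Di \subset phi D.
  move=> sDi; have [DiF _ _ _] := sDi.
  have lt_phi := phi_child _ _ (splits_child hF sDi DF).
  exact: subset_trans (IH Di (splits_proper hF sDi) DiF) (proper_sub lt_phi).
by rewrite -{1}eD subUset (sub_phi _ _ sD) (sub_phi _ _ (splitsC sD)).
Qed.

Lemma forest_map_hull F G phi : is_forest F -> compatible G -> forest_map F G phi ->
  forall D, D \in F -> inner D -> hull (phi D) = hull D.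
Proof.
move=> hF cG mphi D DF iD; have sub := forest_map_sub hF mphi.
case: mphi => _ phi_inner _ _ phi_children.
have [D1 [D2 sD]] := forest_split hF DF iD; have [D1F D2F _ eD] := sD.
have [E1 [E2 [cE1 cE2 nE sE1 sE2]]] := phi_children D D1 D2
  (splits_child hF sD DF) (splits_child hF (splitsC sD) DF) (splits_neq hF sD).
have [phiDG _] := phi_inner D DF iD; have nphiD := forest_neq0 cG.1 phiDG.
have [X [Y [sT sE1X sE2Y]]] := splits_sides cG phiDG (children_splits cG.1 cE1 cE2 nE).
rewrite -{2}eD; symmetry; apply: (hull_across (hull_in nphiD) sT).
- exact: (forest_neq0 hF D1F).
- exact: (forest_neq0 hF D2F).
- exact: (subset_trans (sub D1 D1F) (subset_trans sE1 sE1X)).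
- exact: (subset_trans (sub D2 D2F) (subset_trans sE2 sE2Y)).
Qed.

Lemma forest_le_extends F G : is_forest F -> compatible G -> forest_le F G -> extends F G.
Proof.
move=> hF cG [phi mphi] A AF.
have [iA | /(not_inner_set1 (forest_neq0 hF AF)) [x ->]] := boolP (inner A); last first.
  by exists [set x]; split; rewrite ?forest_set1 ?cG.1.
have [_ phi_inner _ _ _] := mphi; have [phiAG _] := phi_inner A AF iA.
by exists (phi A); rewrite (forest_map_sub hF mphi AF) (forest_map_hull hF cG mphi AF iA).
Qed.

Lemma interval0_compatible F : interval0 T F -> compatible F.
Proof.
case=> hF [_ [phi mphi]]; split=> // D D' DF D'F eh.
have [_ phi_inner phi_inj _ _] := mphi.
have phi_hull Z : Z \in F -> inner Z -> phi Z = hull Z.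
  move=> ZF iZ; have [phiZT _] := phi_inner Z ZF iZ.
  by rewrite -(forest_map_hull hF compatible_tree mphi ZF iZ) hull_id.
have set1_case Z Z' : Z \in F -> Z' \in F -> hull Z = hull Z' -> ~~ inner Z -> Z = Z'.
  move=> ZF Z'F ehZ /(not_inner_set1 (forest_neq0 hF ZF)) [x eZ].
  rewrite eZ; apply/esym/(hull_eq_set1 (forest_neq0 hF Z'F)).
  by rewrite -ehZ eZ hull_set1.
have [iD|] := boolP (inner D); last exact: set1_case.
have [iD'|] := boolP (inner D'); last by move/(set1_case _ _ D'F DF (esym eh)).
by apply: phi_inj; rewrite ?inE ?DF ?D'F ?iD ?iD' // !phi_hull.
Qed.

Definition extension G A := odflt A [pick B in G | hull B == hull A].

Section Extension.
Variables (F G : {set {set I}}).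
Hypotheses (cF : compatible F) (cG : compatible G) (FG : extends F G).

Lemma extensionP A : A \in F ->
  [/\ extension G A \in G, A \subset extension G A & hull (extension G A) = hull A].
Proof.
move=> AF; have [B [BG sAB hAB]] := FG AF; rewrite /extension.
case: pickP => [B' /andP [B'G /eqP hB'] | /(_ B)]; last by rewrite BG hAB eqxx.
by have -> : B' = B by apply: cG.2; rewrite // hB' hAB.
Qed.

Lemma extension_proper C D : C \in F -> D \in F -> C \proper D ->
  extension G C \proper extension G D.
Proof.
move=> CF DF pCD; have [C'G sCC' hC'] := extensionP CF; have [D'G sDD' hD'] := extensionP DF.
have phCD : hull (extension G C) \proper hull (extension G D).
  by rewrite hC' hD' (hull_proper cF CF DF pCD).
have /set0Pn [x xC] := forest_neq0 cF.1 CF; have xD := subsetP (proper_sub pCD) x xC.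
case/orP: (forest_comparable cG.1 C'G D'G (subsetP sCC' x xC) (subsetP sDD' x xD)) => s.
  by rewrite properEneq s andbT; apply: contraTneq phCD => ->; rewrite properxx.
by case/negP: (proper_hull_nsub (forest_neq0 cG.1 D'G) phCD).
Qed.

Lemma extension_children D C1 C2 : child F C1 D -> child F C2 D -> C1 != C2 ->
  exists E1 E2, [/\ child G E1 (extension G D), child G E2 (extension G D), E1 != E2,
    extension G C1 \subset E1 & extension G C2 \subset E2].
Proof.
move=> cC1 cC2 nC; have /and4P [C1F DF _ _] := cC1; have /and4P [C2F _ _ _] := cC2.
have sD := children_splits cF.1 cC1 cC2 nC; have [_ _ _ eD] := sD.
have [D'G sDD' hD'] := extensionP DF.
have [C1'G sC1 _] := extensionP C1F; have [C2'G sC2 _] := extensionP C2F.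
have iD' : inner (extension G D).
  exact: leq_trans (child_inner cF.1 cC1) (subset_leq_card sDD').
have [E1 [E2 sD']] := forest_split cG.1 D'G iD'; have [E1G E2G _ _] := sD'.
have apart E : E \in G -> E \proper extension G D ->
    extension G C1 \subset E -> extension G C2 \subset E -> False.
  move=> EG pE s1 s2; have := hull_proper cG EG D'G pE; rewrite hD'.
  move/(proper_hull_nsub (forest_neq0 cF.1 DF))/negP; apply.
  by rewrite -eD subUset (subset_trans sC1 s1) (subset_trans sC2 s2).
have cE1 := splits_child cG.1 sD' D'G; have cE2 := splits_child cG.1 (splitsC sD') D'G.
have p1 := extension_proper C1F DF (splits_proper cF.1 sD).
have p2 := extension_proper C2F DF (splits_proper cF.1 (splitsC sD)).
case/orP: (splits_sub cG.1 sD' C1'G p1) => s1;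
case/orP: (splits_sub cG.1 sD' C2'G p2) => s2.
- by case: (apart E1 E1G (splits_proper cG.1 sD') s1 s2).
- by exists E1, E2; rewrite (splits_neq cG.1 sD').
- by exists E2, E1; rewrite eq_sym (splits_neq cG.1 sD').
- by case: (apart E2 E2G (splits_proper cG.1 (splitsC sD')) s1 s2).
Qed.

Lemma extends_forest_le : forest_le F G.
Proof.
exists (extension G); split.
- move=> i; have [iG _ hi] := extensionP (forest_set1 cF.1 i).
  by apply: hull_eq_set1 (forest_neq0 cG.1 iG) _; rewrite hi hull_set1.
- move=> A AF iA; have [A'G sAA' _] := extensionP AF; split=> //.
  exact: leq_trans iA (subset_leq_card sAA').
- move=> A B /andP [AF _] /andP [BF _] eAB; apply: cF.2 => //.
  by have [_ _ <-] := extensionP AF; have [_ _ <-] := extensionP BF; rewrite eAB.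
- by move=> C D /and4P [CF DF pCD _]; apply: extension_proper.
- exact: extension_children.
Qed.

End Extension.

Lemma forest_leP F G : compatible F -> compatible G -> forest_le F G <-> extends F G.
Proof.
move=> cF cG; split; first exact: forest_le_extends cF.1 cG.
exact: extends_forest_le.
Qed.

Lemma extends_tree F : compatible F -> extends F T.
Proof.
move=> cF A AF; have nA := forest_neq0 cF.1 AF.
by exists (hull A); rewrite hull_in ?sub_hull ?(hull_id (hull_in nA)).
Qed.

Lemma interval0P F : interval0 T F <-> compatible F.
Proof.
split; first exact: interval0_compatible.
move=> cF; split; first exact: cF.1.
split; first exact: forest0_le.
exact/(forest_leP cF compatible_tree)/extends_tree.
Qed.

Definition hulls F := [set hull A | A in F].

Lemma mem_hulls F A : A \in F -> hull A \in hulls F.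
Proof. exact: imset_f. Qed.

Lemma extends_refl F : extends F F.
Proof. by move=> A AF; exists A. Qed.

Lemma extends_trans F G H : extends F G -> extends G H -> extends F H.
Proof.
move=> FG GH A AF; have [B [BG sAB ->]] := FG A AF; have [C [CH sBC ->]] := GH B BG.
by exists C; rewrite (subset_trans sAB sBC).
Qed.

Lemma extends_hulls F G : extends F G -> hulls F \subset hulls G.
Proof.
move=> FG; apply/subsetP=> u /imsetP [A AF ->].
by have [B [BG _ ->]] := FG A AF; apply: mem_hulls.
Qed.

Lemma extends_sub F G A B : compatible G -> extends F G -> A \in F -> B \in G ->
  hull B = hull A -> A \subset B.
Proof.
move=> cG FG AF BG hBA; have [B' [B'G sAB' hAB']] := FG A AF.
by have -> : B = B' by apply: cG.2; rewrite // hBA.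
Qed.

Lemma hull_lt_sub F A C x : compatible F -> A \in F -> C \in F -> hull C \proper hull A ->
  x \in A -> x \in C -> C \subset A.
Proof.
move=> cF AF CF phCA xA xC.
case/orP: (forest_comparable cF.1 AF CF xA xC) => // sAC.
by case/negP: (proper_hull_nsub (forest_neq0 cF.1 AF) phCA).
Qed.

Lemma splits_meet G B B1 B2 A : compatible G -> B \in G -> splits G B B1 B2 ->
  A != set0 -> A \subset B -> hull A = hull B -> exists2 x, x \in A & x \in B1.
Proof.
move=> cG BG sB nA sAB hAB; have [_ B2G _ eB] := sB.
have phB2 : hull B2 \proper hull A.
  by rewrite hAB (hull_proper cG B2G BG (splits_proper cG.1 (splitsC sB))).
apply/exists_inP; apply: contraNT (proper_hull_nsub nA phB2) => /exists_inPn noB1.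
by apply/subsetP=> x xA; move: (subsetP sAB x xA); rewrite -eB inE (negbTE (noB1 x xA)).
Qed.

Section ExtendsMem.
Variables (F G : {set {set I}}).
Hypotheses (cF : compatible F) (cG : compatible G) (FG : extends F G).

Lemma extends_mem B : B \in G -> (forall B', B' \in G -> B' \subset B -> hull B' \in hulls F) ->
  B \in F.
Proof.
elim/proper_ind: B => B IH BG hB; have nB := forest_neq0 cG.1 BG.
have [iB | /(not_inner_set1 nB) [x ->]] := boolP (inner B); last exact: (forest_set1 cF.1).
have /imsetP [A AF hBA] := hB B BG (subxx B); have nA := forest_neq0 cF.1 AF.
have sAB := extends_sub cG FG AF BG hBA.
have part Bi Bj : splits G B Bi Bj -> Bi \subset A.
  move=> sBi; have [BiG _ _ _] := sBi; have pBi := splits_proper cG.1 sBi.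
  have BiF : Bi \in F.
    apply: (IH _ pBi BiG) => B' B'G sB'.
    exact: hB B'G (subset_trans sB' (proper_sub pBi)).
  have [y yA yBi] := splits_meet cG BG sBi nA sAB (esym hBA).
  by apply: hull_lt_sub cF AF BiF _ yA yBi; rewrite -hBA (hull_proper cG BiG BG pBi).
have [B1 [B2 sB]] := forest_split cG.1 BG iB; have [_ _ _ eB] := sB.
suff -> : B = A by [].
by apply/eqP; rewrite eqEsubset -{1}eB subUset (part _ _ sB) (part _ _ (splitsC sB)).
Qed.

Lemma extends_eq : hulls G \subset hulls F -> F = G.
Proof.
move=> sGF; have sub : G \subset F.
  apply/subsetP=> B BG; apply: extends_mem BG _ => B' B'G _.
  exact: subsetP sGF _ (mem_hulls B'G).
apply/eqP; rewrite eqEsubset sub andbT; apply/subsetP=> A AF.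
have [B [BG _ hAB]] := FG AF.
by rewrite (cF.2 A B AF (subsetP sub B BG) hAB).
Qed.

End ExtendsMem.

Lemma add_cluster_extends F F1 F2 V : compatible F -> compatible F1 -> compatible F2 ->
  extends F F1 -> extends F F2 -> V \in F1 -> V \in F2 ->
  hulls F1 \subset hull V |: hulls F -> extends F1 F2.
Proof.
move=> cF cF1 cF2 FF1 FF2 VF1 VF2 hF1; elim/proper_ind=> B IH BF1.
have nB := forest_neq0 cF1.1 BF1.
have [hBV | nhBV] := eqVneq (hull B) (hull V).
  by exists V; rewrite (cF1.2 B V BF1 VF1 hBV).
have [iB | /(not_inner_set1 nB) [x ->]] := boolP (inner B); last first.
  by exists [set x]; rewrite (forest_set1 cF2.1).
have /imsetP [A AF hBA] : hull B \in hulls F.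
  by have := subsetP hF1 _ (mem_hulls BF1); rewrite in_setU1 (negbTE nhBV).
have nA := forest_neq0 cF.1 AF.
have sAB := extends_sub cF1 FF1 AF BF1 hBA.
have [C [CF2 sAC hAC]] := FF2 A AF.
have part Bi Bj : splits F1 B Bi Bj -> Bi \subset C.
  move=> sBi; have [BiF1 _ _ _] := sBi; have pBi := splits_proper cF1.1 sBi.
  have [Ci [CiF2 sBCi hBCi]] := IH Bi pBi BiF1.
  have [y yA yBi] := splits_meet cF1 BF1 sBi nA sAB (esym hBA).
  apply: subset_trans sBCi (hull_lt_sub cF2 CF2 CiF2 _ (subsetP sAC y yA) (subsetP sBCi y yBi)).
  by rewrite -hBCi -hAC -hBA (hull_proper cF1 BiF1 BF1 pBi).
have [B1 [B2 sB]] := forest_split cF1.1 BF1 iB; have [_ _ _ eB] := sB.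
exists C; split=> //; last by rewrite hBA hAC.
by rewrite -eB subUset (part _ _ sB) (part _ _ (splitsC sB)).
Qed.

(** * Inserting one cluster *)

Section Grow.
Variables (F G : {set {set I}}) (V V1 V2 : {set I}).
Hypotheses (cF : compatible F) (cG : compatible G) (FG : extends F G) (VG : V \in G).
Hypotheses (nVF : hull V \notin hulls F) (sV : splits F V V1 V2).

Let hF := cF.1.
Let hG := cG.1.
Let nV : V != set0 := forest_neq0 hG VG.

Definition crossing := [set A in F | (A :&: V != set0) && ~~ (A \subset V)].

(* Once V is inserted, a cluster crossing V must contain it; taking along the
   crossing clusters with smaller hull keeps the family laminar. *)
Definition absorb A :=
  if A \in crossing then V :|: \bigcup_(C in crossing | hull C \subset hull A) C else A.

Definition grow := V |: [set absorb A | A in F].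

Lemma crossing_mem A : A \in crossing -> A \in F.
Proof. by rewrite inE => /andP []. Qed.

Lemma crossing_meet A : A \in crossing -> exists2 x, x \in A & x \in V.
Proof. by rewrite inE => /and3P [_ /set0Pn [x /setIP [? ?]] _]; exists x. Qed.

Lemma crossing_nsub A : A \in crossing -> ~~ (A \subset V).
Proof. by rewrite inE => /and3P []. Qed.

Lemma not_crossing A : A \in F -> A \notin crossing -> [disjoint A & V] || (A \subset V).
Proof. by move=> AF; rewrite inE AF /= negb_and !negbK -setI_eq0. Qed.

Lemma sub_not_crossing A B : A \in F -> A \notin crossing -> B \subset A -> B \notin crossing.
Proof.
move=> AF nAK sBA; apply/negP=> BK; have [x xB xV] := crossing_meet BK.
case/orP: (not_crossing AF nAK) => [dis | sAV].
  by move: (disjointFr dis (subsetP sBA x xB)); rewrite xV.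
by move: (crossing_nsub BK); rewrite (subset_trans sBA sAV).
Qed.

Lemma crossing_inner A : A \in crossing -> inner A.
Proof.
move=> AK; have nA := forest_neq0 hF (crossing_mem AK).
have [//|/(not_inner_set1 nA) [y eA]] := boolP (inner A).
have [x xA xV] := crossing_meet AK; case/negP: (crossing_nsub AK).
by move: xA; rewrite eA inE sub1set => /eqP <-.
Qed.

Lemma crossing_sup A B : A \in crossing -> B \in G -> A \subset B -> V \subset B.
Proof.
move=> AK BG sAB; have [x xA xV] := crossing_meet AK.
case/orP: (forest_comparable hG BG VG (subsetP sAB x xA) xV) => // sBV.
by move: (crossing_nsub AK); rewrite (subset_trans sAB sBV).
Qed.

Lemma crossing_hull A : A \in crossing -> hull V \proper hull A.
Proof.
move=> AK; have AF := crossing_mem AK; have [B [BG sAB hAB]] := FG AF.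
rewrite properEneq hAB (hull_mono nV (crossing_sup AK BG sAB)) andbT.
by apply: contraNneq nVF => ->; rewrite -hAB mem_hulls.
Qed.

Lemma crossing_sub_hull A : A \in crossing -> V \subset hull A.
Proof. by move=> AK; apply: subset_trans (sub_hull nV) (proper_sub (crossing_hull AK)). Qed.

Lemma crossing_hull_comparable A C : A \in crossing -> C \in crossing ->
  (hull A \subset hull C) || (hull C \subset hull A).
Proof.
move=> AK CK; have /set0Pn [x xV] := nV.
have nA := forest_neq0 hF (crossing_mem AK); have nC := forest_neq0 hF (crossing_mem CK).
exact: (forest_comparable tree_forest (hull_in nA) (hull_in nC)
  (subsetP (crossing_sub_hull AK) x xV) (subsetP (crossing_sub_hull CK) x xV)).
Qed.

Lemma crossing_side A X Y : A \in crossing -> splits T (hull A) X Y ->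
  (V \subset X) || (V \subset Y).
Proof.
move=> AK sT; have nA := forest_neq0 hF (crossing_mem AK).
have nhV := proper_neq (crossing_hull AK).
by case/orP: (hull_sides (hull_in nA) sT nV (crossing_sub_hull AK) nhV) => sh;
  rewrite (subset_trans (sub_hull nV) sh) ?orbT.
Qed.

Lemma absorb_id A : A \notin crossing -> absorb A = A.
Proof. by rewrite /absorb => /negbTE ->. Qed.

Lemma absorbE A : A \in crossing ->
  absorb A = V :|: \bigcup_(C in crossing | hull C \subset hull A) C.
Proof. by rewrite /absorb => ->. Qed.

Lemma sub_absorb A : A \subset absorb A.
Proof.
rewrite /absorb; case: ifP => AK //; apply: subset_trans (subsetUr _ _).
by apply: (bigcup_max A) => //; rewrite AK subxx.
Qed.

Lemma absorb_neq0 A : A \in F -> absorb A != set0.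
Proof.
by move=> AF; apply: contraNneq (forest_neq0 hF AF) => A0; rewrite -subset0 -A0 sub_absorb.
Qed.

Lemma hull_absorb A : A \in F -> hull (absorb A) = hull A.
Proof.
move=> AF; have nA := forest_neq0 hF AF.
apply/eqP; rewrite eqEsubset (hull_mono nA (sub_absorb A)) andbT.
apply: hull_min (absorb_neq0 AF) (hull_in nA) _; rewrite /absorb; case: ifP => AK.
  rewrite subUset crossing_sub_hull //=; apply/bigcupsP=> C /andP [CK sC].
  exact: subset_trans (sub_hull (forest_neq0 hF (crossing_mem CK))) sC.
exact: sub_hull.
Qed.

Lemma absorb_mono A B : A \in crossing -> B \in crossing -> hull A \subset hull B ->
  absorb A \subset absorb B.
Proof.
move=> AK BK sAB; rewrite (absorbE AK) (absorbE BK) setUS //.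
by apply/bigcupsP=> C /andP [CK sC]; apply: (bigcup_max C) => //; rewrite CK (subset_trans sC sAB).
Qed.

Lemma absorb_sub A B : A \in F -> B \in G -> A \subset B -> hull A = hull B ->
  absorb A \subset B.
Proof.
move=> AF BG sAB hAB; rewrite /absorb; case: ifP => AK //.
rewrite subUset (crossing_sup AK BG sAB) /=; apply/bigcupsP=> C /andP [CK sC].
have [B' [B'G sCB' hCB']] := FG (crossing_mem CK); apply: (subset_trans sCB').
have /set0Pn [x xV] := nV; have VB' := subsetP (crossing_sup CK B'G sCB') x xV.
case/orP: (forest_comparable hG B'G BG VB' (subsetP (crossing_sup AK BG sAB) x xV)) => // sBB'.
suff -> : B' = B by [].
apply: cG.2 => //; apply/eqP; rewrite eqEsubset (hull_mono (forest_neq0 hG BG) sBB').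
by rewrite -hCB' -hAB sC.
Qed.

Lemma absorb_in_grow A : A \in F -> absorb A \in grow.
Proof. by move=> AF; rewrite setU1r // imset_f. Qed.

Lemma not_crossing_in_grow A : A \in F -> A \notin crossing -> A \in grow.
Proof. by move=> AF nAK; rewrite -(absorb_id nAK) absorb_in_grow. Qed.

Lemma growP X : X \in grow -> X = V \/ exists2 A, A \in F & X = absorb A.
Proof. by case/setU1P=> [->|/imsetP [A AF ->]]; [left | right; exists A]. Qed.

Lemma absorb_laminar A B : A \in crossing -> B \in F -> B \notin crossing ->
  (B \subset absorb A) || [disjoint B & absorb A].
Proof.
move=> AK BF nBK; case/orP: (not_crossing BF nBK) => [disBV | sBV]; last first.
  by rewrite (absorbE AK) (subset_trans sBV (subsetUl _ _)).
case: (set_0Vmem (B :&: absorb A)) => [BA0 | [x /setIP [xB]]].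
  by rewrite -setI_eq0 BA0 eqxx orbT.
rewrite (absorbE AK) => /setUP [xV | /bigcupP [C /andP [CK sC] xC]].
  by move: (disjointFr disBV xB); rewrite xV.
case/orP: (forest_comparable hF BF (crossing_mem CK) xB xC) => [sBC | sCB].
  by rewrite (subset_trans sBC) // (subset_trans _ (subsetUr _ _)) // (bigcup_max C) ?CK.
have [y yC yV] := crossing_meet CK.
by move: (disjointFr disBV (subsetP sCB y yC)); rewrite yV.
Qed.

Lemma grow_laminar X Y : X \in grow -> Y \in grow ->
  [|| X \subset Y, Y \subset X | [disjoint X & Y]].
Proof.
have V_laminar A : A \in F -> [|| V \subset absorb A, absorb A \subset V | [disjoint V & absorb A]].
  move=> AF; have [AK | nAK] := boolP (A \in crossing); first by rewrite (absorbE AK) subsetUl.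
  rewrite (absorb_id nAK) disjoint_sym.
  by case/orP: (not_crossing AF nAK) => ->; rewrite ?orbT.
case/growP=> [-> | [A AF ->]]; case/growP=> [-> | [B BF ->]].
- by rewrite subxx.
- exact: V_laminar.
- exact/laminarC/V_laminar.
have [AK | nAK] := boolP (A \in crossing); have [BK | nBK] := boolP (B \in crossing).
- case/orP: (crossing_hull_comparable AK BK) => s; first by rewrite (absorb_mono AK BK s).
  by rewrite (absorb_mono BK AK s) orbT.
- rewrite (absorb_id nBK); apply: laminarC.
  by case/orP: (absorb_laminar AK BF nBK) => ->; rewrite ?orbT.
- by rewrite (absorb_id nAK); case/orP: (absorb_laminar BK AF nAK) => ->; rewrite ?orbT.
- by rewrite (absorb_id nAK) (absorb_id nBK) (forest_laminar hF AF BF).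
Qed.

Definition absorb_lt A := V :|: \bigcup_(C in crossing | hull C \proper hull A) C.

Lemma absorb_ltE A : A \in crossing -> absorb A = absorb_lt A :|: A.
Proof.
move=> AK; have AF := crossing_mem AK; rewrite (absorbE AK) /absorb_lt -setUA.
congr (V :|: _); apply/eqP; rewrite eqEsubset; apply/andP; split.
  apply/bigcupsP=> C /andP [CK sC]; have [hCA | nhCA] := eqVneq (hull C) (hull A).
    by rewrite (cF.2 C A (crossing_mem CK) AF hCA) subsetUr.
  apply: subsetU; apply/orP; left.
  by apply: (bigcup_max C) => //; rewrite CK properEneq nhCA.
rewrite subUset andbC (bigcup_max A) //=; last by rewrite AK subxx.
by apply/bigcupsP=> C /andP [CK pC]; apply: (bigcup_max C) => //; rewrite CK (proper_sub pC).
Qed.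

Lemma absorb_lt_in_grow A : A \in crossing -> absorb_lt A \in grow.
Proof.
move=> AK; pose P := [pred C | (C \in crossing) && (hull C \proper hull A)].
case: (pickP P) => [C0 PC0 | noP]; last first.
  by rewrite /absorb_lt big_pred0 ?setU0 ?setU11.
have [Cs /andP [CsK pCs] maxCs] := arg_maxnP (fun C => #|hull C|) PC0.
suff -> : absorb_lt A = absorb Cs by apply: absorb_in_grow (crossing_mem CsK).
rewrite (absorbE CsK) /absorb_lt; congr (V :|: _); apply: eq_bigl => C.
apply/andP/andP=> [[CK pC] | [CK sC]]; split=> //; last exact: sub_proper_trans sC pCs.
case/orP: (crossing_hull_comparable CK CsK) => // sCsC.
have := maxCs C; rewrite /= CK pC => /(_ isT) leC.
suff -> : hull C = hull Cs by [].
by apply/eqP; rewrite eq_sym eqEcard sCsC leC.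
Qed.

Section AbsorbSplits.
Variables (A Z Z' Ain Aout : {set I}).
Hypotheses (AK : A \in crossing) (sT : splits T (hull A) Z Z') (VZ : V \subset Z).
Hypotheses (sA : splits F A Ain Aout) (AoutZ' : Aout \subset Z').

Lemma absorb_lt_sub_side : absorb_lt A \subset Z.
Proof.
have [_ _ disZ _] := sT; have nA := forest_neq0 hF (crossing_mem AK).
rewrite subUset VZ; apply/bigcupsP=> C /andP [CK pC]; have nC := forest_neq0 hF (crossing_mem CK).
apply: subset_trans (sub_hull nC) _.
have sCA := subset_trans (sub_hull nC) (proper_sub pC).
case/orP: (hull_sides (hull_in nA) sT nC sCA (proper_neq pC)) => // sCZ'.
by case/negP: (subsetC_disjoint disZ nV VZ); apply: subset_trans (crossing_sub_hull CK) sCZ'.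
Qed.

Lemma Aout_disjoint_V : [disjoint Aout & V].
Proof.
have [_ _ disZ _] := sT; rewrite disjoint_sym in disZ.
exact: disjointWl AoutZ' (disjointWr VZ disZ).
Qed.

Lemma Ain_sub_absorb_lt : Ain \subset absorb_lt A.
Proof.
have [AinF _ _ eA] := sA; have [x xA xV] := crossing_meet AK.
have xAin : x \in Ain.
  by move: xA; rewrite -eA inE (disjointFl Aout_disjoint_V xV) orbF.
have [AinK | nAinK] := boolP (Ain \in crossing).
  have phA := hull_proper cF AinF (crossing_mem AK) (splits_proper hF sA).
  by apply: subsetU; apply/orP; right; apply: (bigcup_max Ain) => //; rewrite AinK phA.
case/orP: (not_crossing AinF nAinK) => [disV | sV'].
  by move: (disjointFr disV xAin); rewrite xV.
exact: subset_trans sV' (subsetUl _ _).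
Qed.

Lemma absorb_splits : splits grow (absorb A) (absorb_lt A) Aout.
Proof.
have [_ AoutF _ eA] := sA; have [_ _ disZ _] := sT.
split.
- exact: absorb_lt_in_grow.
- apply: not_crossing_in_grow AoutF _; apply/negP=> /crossing_meet [x xAout xV].
  by move: (disjointFr Aout_disjoint_V xAout); rewrite xV.
- exact: disjointWl absorb_lt_sub_side (disjointWr AoutZ' disZ).
by rewrite (absorb_ltE AK) -{3}eA setUA (setUidPl Ain_sub_absorb_lt).
Qed.

End AbsorbSplits.

Lemma grow_split X : X \in grow -> inner X -> exists B1 B2, splits grow X B1 B2.
Proof.
have split_in_grow B B1 B2 : splits F B B1 B2 ->
    (forall Bi, Bi \in F -> Bi \subset B -> Bi \notin crossing) -> splits grow B B1 B2.
  move=> [B1F B2F dis eB] nK; rewrite -eB in nK.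
  by split; rewrite // not_crossing_in_grow ?nK ?subsetUl ?subsetUr.
case/growP=> [-> _ | [A AF ->]].
  exists V1, V2; apply: split_in_grow sV _ => Vi _ sVi.
  by apply: contraL sVi; apply: crossing_nsub.
have [AK _ | nAK] := boolP (A \in crossing); last first.
  rewrite (absorb_id nAK) => iA; have [A1 [A2 sA]] := forest_split hF AF iA.
  by exists A1, A2; apply: split_in_grow sA _ => Ai _; apply: sub_not_crossing.
have [A1 [A2 sA]] := forest_split hF AF (crossing_inner AK).
have [X0 [Y0 [sT s1 s2]]] := splits_sides cF AF sA.
case/orP: (crossing_side AK sT) => VS.
  by exists (absorb_lt A), A2; apply: absorb_splits AK sT VS sA s2.
by exists (absorb_lt A), A1; apply: absorb_splits AK (splitsC sT) VS (splitsC sA) s1.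
Qed.

Lemma grow_compatible : compatible grow.
Proof.
split.
  apply: is_forestI.
  - apply/negP=> /growP [V0 | [A AF A0]]; first by move: nV; rewrite -V0 eqxx.
    by move: (absorb_neq0 AF); rewrite -A0 eqxx.
  - move=> i; have i_nK : [set i] \notin crossing.
      apply/negP=> iK; have [x] := crossing_meet iK; rewrite inE => /eqP -> iV.
      by move: (crossing_nsub iK); rewrite sub1set iV.
    by rewrite -(absorb_id i_nK) absorb_in_grow ?forest_set1.
  - exact: grow_laminar.
  - exact: grow_split.
have hull_absorb_neq A : A \in F -> hull (absorb A) != hull V.
  by move=> AF; rewrite (hull_absorb AF); apply: contraNneq nVF => <-; apply: mem_hulls.
move=> X Y /growP [-> | [A AF ->]] /growP [-> | [B BF ->]] // hXY.
- by move: (hull_absorb_neq B BF); rewrite hXY eqxx.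
- by move: (hull_absorb_neq A AF); rewrite hXY eqxx.
by rewrite (cF.2 A B AF BF) // -(hull_absorb AF) -(hull_absorb BF).
Qed.

Lemma extends_grow : extends F grow.
Proof. by move=> A AF; exists (absorb A); rewrite absorb_in_grow ?sub_absorb ?hull_absorb. Qed.

Lemma grow_extends : extends grow G.
Proof.
move=> X /growP [-> | [A AF ->]]; first by exists V.
have [B [BG sAB hAB]] := FG AF.
by exists B; rewrite (absorb_sub AF BG sAB hAB) (hull_absorb AF).
Qed.

Lemma hulls_grow : hulls grow = hull V |: hulls F.
Proof.
rewrite /hulls imsetU1 -imset_comp; congr (_ |: _).
by apply: eq_in_imset => A AF /=; apply: hull_absorb.
Qed.

End Grow.

(** * The labeling *)

Definition key_minimal F G (v : {set I}) :=
  forall w, w \in hulls G -> w \notin hulls F -> set_key v <= set_key w.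

Section Step.
Variables (F G : {set {set I}}) (v : {set I}).
Hypotheses (cF : compatible F) (cG : compatible G) (FG : extends F G).
Hypotheses (vG : v \in hulls G) (vF : v \notin hulls F) (mv : key_minimal F G v).

Lemma key_minimal_below w : w \in hulls G -> w \proper v -> w \in hulls F.
Proof. by move=> wG pwv; apply: contraT => wF; move: (mv wG wF); rewrite leqNgt set_key_proper. Qed.

Lemma hull_below_new V B : V \in G -> hull V = v -> B \in G -> B \subset V ->
  hull B \in v |: hulls F.
Proof.
move=> VG hV BG sBV; have [-> | nhB] := eqVneq (hull B) v; first exact: setU11.
apply/setU1P; right; apply: key_minimal_below (mem_hulls BG) _.
by rewrite properEneq nhB -hV (hull_mono (forest_neq0 cG.1 BG) sBV).
Qed.

Lemma exists_step : exists2 F', compatible F' &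
  [/\ extends F F', extends F' G & hulls F' = v |: hulls F].
Proof.
have [V VG ev] := imsetP vG; have nV := forest_neq0 cG.1 VG.
have nVF : hull V \notin hulls F by rewrite -ev.
have iV : inner V.
  apply: contraNT nVF => /(not_inner_set1 nV) [x ->].
  by rewrite hull_set1 -[X in X \in _]hull_set1 mem_hulls ?(forest_set1 cF.1).
(* The clusters of G below V have hulls of smaller key, hence are in F. *)
have below B : B \in G -> B \proper V -> B \in F.
  move=> BG pBV; apply: (extends_mem cF cG FG BG) => B' B'G sB'B.
  apply: key_minimal_below (mem_hulls B'G) _; rewrite ev.
  exact: hull_proper cG B'G VG (sub_proper_trans sB'B pBV).
have [V1 [V2 sVG]] := forest_split cG.1 VG iV; have [V1G V2G dis eV] := sVG.
have sV : splits F V V1 V2.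
  by split; rewrite // below // ?(splits_proper cG.1 sVG) ?(splits_proper cG.1 (splitsC sVG)).
exists (grow F V); first exact: (grow_compatible cF cG FG VG nVF sV).
rewrite (hulls_grow cF cG FG VG nVF) ev.
by split; [exact: (extends_grow cF cG FG VG nVF) | exact: (grow_extends cF cG FG VG nVF) |].
Qed.

Lemma step_unique F1 F2 : compatible F1 -> compatible F2 ->
  extends F F1 -> extends F1 G -> extends F F2 -> extends F2 G ->
  hulls F1 = v |: hulls F -> hulls F2 = v |: hulls F -> F1 = F2.
Proof.
move=> cF1 cF2 FF1 F1G FF2 F2G hF1 hF2.
have [V VG ev] := imsetP vG.
have V_in Fi : compatible Fi -> extends Fi G -> hulls Fi = v |: hulls F -> V \in Fi.
  move=> cFi FiG hFi; apply: (extends_mem cFi cG FiG VG) => B BG sBV.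
  by rewrite hFi (hull_below_new VG (esym ev) BG sBV).
have F1F2 : extends F1 F2.
  apply: (add_cluster_extends cF cF1 cF2 FF1 FF2 (V_in _ cF1 F1G hF1) (V_in _ cF2 F2G hF2)).
  by rewrite hF1 ev.
by apply: extends_eq cF1 cF2 F1F2 _; rewrite hF1 hF2.
Qed.

End Step.

Definition hull_cover F G := [/\ compatible F, compatible G, extends F G &
  exists2 v, v \notin hulls F & hulls G = v |: hulls F].

Lemma extends_new_hull F G : compatible F -> compatible G -> extends F G -> F <> G ->
  exists2 u, u \in hulls G & u \notin hulls F.
Proof.
move=> cF cG FG nFG; apply/subsetPn/negP => sGF.
exact: nFG (extends_eq cF cG FG sGF).
Qed.

Lemma exists_key_minimal F G u : u \in hulls G -> u \notin hulls F ->
  exists v, [/\ v \in hulls G, v \notin hulls F & key_minimal F G v].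
Proof.
move=> uG uF; have uD : u \in hulls G :\: hulls F by apply/setDP.
case: (arg_minnP (@set_key I) uD) => v /setDP [vG vF] minv; exists v; split=> // w wG wF.
by apply: minv; apply/setDP.
Qed.

Local Notation covers0 := (covers (interval0 T) (@forest_le I)).

Lemma coversP F G : covers0 F G <-> hull_cover F G.
Proof.
split.
  case=> /interval0P cF /interval0P cG [/(forest_leP cF cG) FG nFG] noz.
  split=> //; have [u uG uF] := extends_new_hull cF cG FG nFG.
  have [v [vG vF mv]] := exists_key_minimal uG uF; exists v => //.
  have [F' cF' [FF' F'G hF']] := exists_step cF cG FG vG vF mv.
  have [<- // | nF'G] := eqVneq F' G; case: noz; exists F'; split.
  - exact/interval0P.
  - by split; [apply/(forest_leP cF cF') | move=> eFF'; move: vF; rewrite eFF' hF' setU11].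
  - by split; [apply/(forest_leP cF' cG) | apply/eqP].
case=> cF cG FG [v vF hG]; have vG : v \in hulls G by rewrite hG setU11.
split; try exact/interval0P.
  by split; [apply/(forest_leP cF cG) | move=> eFG; move: vF; rewrite eFG vG].
case=> z [/interval0P cz [/(forest_leP cF cz) Fz nFz] [/(forest_leP cz cG) zG nzG]].
have [u uz uF] := extends_new_hull cF cz Fz nFz.
have := subsetP (extends_hulls zG) u uz; rewrite hG => /setU1P [euv | uF']; last first.
  by rewrite uF' in uF.
apply: nzG; apply: extends_eq cz cG zG _; rewrite hG -euv subUset sub1set uz.
exact: extends_hulls Fz.
Qed.

Definition label F G := \max_(u in hulls G :\: hulls F) set_key u.

Lemma label_cover F G v : v \notin hulls F -> hulls G = v |: hulls F -> label F G = set_key v.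
Proof.
move=> vF hG; rewrite /label hG setDUl setDv setU0.
by rewrite (setDidPl _) ?big_set1 // disjoints1.
Qed.

Lemma hull_cover_label F G : hull_cover F G ->
  exists u, [/\ u \notin hulls F, hulls G = u |: hulls F & label F G = set_key u].
Proof. by case=> _ _ _ [u uF hG]; exists u; rewrite (label_cover uF hG). Qed.

Local Notation chain := (sat_chain (interval0 T) (@forest_le I)).

Lemma chain_extends x s y : chain x s y -> compatible x -> compatible y /\ extends x y.
Proof.
elim: s x => [|z s IH] x /=; first by move=> <- cx; split=> //; apply: extends_refl.
case=> /coversP [_ cz xz _] zsy _; have [cy zy] := IH z zsy cz.
by split=> //; apply: extends_trans xz zy.
Qed.

Lemma chain_nil x s : chain x s x -> compatible x -> s = [::].
Proof.
case: s => [//|z s] /= [/coversP cxz zsx] cx; have [_ cz xz [u ux hz]] := cxz.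
have [_ zx] := chain_extends zsx cz.
by move: ux; rewrite (subsetP (extends_hulls zx) u) // hz setU11.
Qed.

Lemma chain_label_new x s y l : chain x s y -> compatible x -> l \in chain_label label x s ->
  exists w, [/\ w \in hulls y, w \notin hulls x & l = set_key w].
Proof.
elim: s x => [|z s IH] x //= [cxz zsy] cx; have [u [ux hz ->]] := hull_cover_label ((coversP _ _).1 cxz).
have [_ cz _ _] := (coversP _ _).1 cxz; have [_ zy] := chain_extends zsy cz.
rewrite inE => /orP [/eqP -> | lin].
  by exists u; split=> //; apply: (subsetP (extends_hulls zy)); rewrite hz setU11.
have [w [wy wz ->]] := IH z zsy cz lin; exists w; split=> //.
by apply: contra wz; rewrite hz => wx; apply: setU1r.
Qed.

Lemma mem_chain_label x s y w : chain x s y -> compatible x ->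
  w \in hulls y -> w \notin hulls x -> set_key w \in chain_label label x s.
Proof.
elim: s x => [|z s IH] x /=; first by move=> <- _ ->.
case=> cxz zsy cx wy wx; have [u [ux hz ->]] := hull_cover_label ((coversP _ _).1 cxz).
have [_ cz _ _] := (coversP _ _).1 cxz; rewrite inE.
have [-> | nwu] := eqVneq w u; first by rewrite eqxx.
by rewrite (IH z zsy cz wy) ?orbT // hz !inE negb_or nwu.
Qed.

(* The body of [EL_labeling] for the pair (x, y). *)
Definition el_chain x y := exists s, [/\ chain x s y,
  sorted leq (chain_label label x s),
  (forall s', chain x s' y -> sorted leq (chain_label label x s') -> s' = s) &
  (forall s', chain x s' y -> s' <> s -> lexlt (chain_label label x s) (chain_label label x s'))].

Lemma el_chain_refl x : compatible x -> el_chain x x.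
Proof.
by move=> cx; exists [::]; split=> // s' xs'x; rewrite (chain_nil xs'x cx).
Qed.

Section ELStep.
Variables (x y x1 : {set {set I}}) (v : {set I}).
Hypotheses (cx : compatible x) (cy : compatible y).
Hypotheses (vy : v \in hulls y) (vx : v \notin hulls x) (mv : key_minimal x y v).
Hypotheses (cx1 : compatible x1) (xx1 : extends x x1) (x1y : extends x1 y).
Hypothesis (hx1 : hulls x1 = v |: hulls x).

Lemma head_label_ge z s : chain x (z :: s) y -> set_key v <= label x z.
Proof.
case=> cxz zsy; have [u [ux hz ->]] := hull_cover_label ((coversP _ _).1 cxz).
have [_ cz _ _] := (coversP _ _).1 cxz; have [_ zy] := chain_extends zsy cz.
by apply: mv ux; apply: (subsetP (extends_hulls zy)); rewrite hz setU11.
Qed.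

Lemma head_label_eq z s : chain x (z :: s) y -> label x z = set_key v -> z = x1.
Proof.
case=> cxz zsy; have [u [ux hz ->]] := hull_cover_label ((coversP _ _).1 cxz).
have [_ cz xz _] := (coversP _ _).1 cxz; have [_ zy] := chain_extends zsy cz.
move/set_key_inj=> euv; rewrite {}euv in hz.
exact: (step_unique cx cy vy mv cz cx1 xz zy xx1 x1y hz hx1).
Qed.

Lemma sorted_head_label z s : chain x (z :: s) y ->
  sorted leq (chain_label label x (z :: s)) -> label x z = set_key v.
Proof.
move=> xzsy; have := mem_chain_label xzsy cx vy vx.
rewrite /= (path_sortedE leq_trans) inE => /orP [/eqP <- // | vs] /andP [/allP all_ge _].
by apply/eqP; rewrite eqn_leq all_ge // (head_label_ge xzsy).
Qed.

Lemma el_chain_step : el_chain x1 y -> el_chain x y.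
Proof.
case=> s1 [x1s1y sorted1 uniq1 lexmin1].
have cxx1 : covers0 x x1 by apply/coversP; split=> //; exists v.
have lab1 : label x x1 = set_key v := label_cover vx hx1.
have no_nil s' : chain x s' y -> s' <> [::].
  by move=> xs'y s'0; move: xs'y vx; rewrite s'0 /= => ->; rewrite vy.
exists (x1 :: s1); split; first by [].
- rewrite /= lab1 (path_sortedE leq_trans) sorted1 andbT; apply/allP=> l.
  case/(chain_label_new x1s1y cx1)=> w [wy wx1 ->]; apply: mv wy _.
  by apply: contra wx1; rewrite hx1; apply: setU1r.
- case=> [|z s'] xzs'y sorted'; first by case: (no_nil _ xzs'y).
  have ez := head_label_eq xzs'y (sorted_head_label xzs'y sorted'); subst z.
  by rewrite (uniq1 s' xzs'y.2 (path_sorted sorted')).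
case=> [|z s'] xzs'y ns'; first by case: (no_nil _ xzs'y).
rewrite /= lab1; have := head_label_ge xzs'y; rewrite leq_eqVlt => /orP [/eqP ev | -> //].
have ez := head_label_eq xzs'y (esym ev); subst z.
rewrite -ev ltnn eqxx /=; apply: lexmin1 xzs'y.2 _ => es1.
by apply: ns'; rewrite es1.
Qed.

End ELStep.

Lemma el_chain_of x y : compatible x -> compatible y -> extends x y -> el_chain x y.
Proof.
move=> cx cy xy; move: {2}#|hulls y :\: hulls x| (erefl #|hulls y :\: hulls x|) => n.
elim: n x cx xy => [|n IH] x cx xy new_n.
  suff -> : x = y by apply: el_chain_refl.
  by apply: extends_eq cx cy xy _; rewrite -setD_eq0 -cards_eq0 new_n.
have /set0Pn [u /setDP [uy ux]] : hulls y :\: hulls x != set0 by rewrite -card_gt0 new_n.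
have [v [vy vx mv]] := exists_key_minimal uy ux.
have [x1 cx1 [xx1 x1y hx1]] := exists_step cx cy xy vy vx mv.
apply: (el_chain_step cx cy vy vx mv cx1 xx1 x1y hx1); apply: IH cx1 x1y _.
have := cardsD1 v (hulls y :\: hulls x); rewrite new_n in_setD vx vy add1n => -[->].
by rewrite hx1 setDDl setUC.
Qed.

End Tree.

Theorem theorem4p4 (I : finType) (T : {set {set I}}) (hT : is_tree T) :
  EL_shellable (interval0 T) (@forest_le I).
Proof.
exists (label T) => x y /(interval0P hT) cx /(interval0P hT) cy xy.
exact: (el_chain_of hT cx cy ((forest_leP hT cx cy).1 xy)).
Qed.
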